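(* Let $(X,\mathcal T,P,\leq,\{\sigma_x:x\in X\})$ be a typed topological space and $p\in P$. If the assignment function $\sigma$ has least $p$-neighborhood, then for every $A\subseteq X$ we have $p\vdash tr(p\vdash tr(A))=p\vdash tr(A)$.
   Context: A typed topological space $(X,\mathcal T,P,\leq,\{\sigma_x:x\in X\})$ consists of a topological space $(X,\mathcal T)$, a partially ordered set $(P,\leq)$ whose elements are called types, and for each $x\in X$ a partial function (assignment function) $\sigma_x:\mathcal U(x)\to P$, where $\mathcal U(x)=\{O\in\mathcal T: x\in O\}$, such that for all $U,V$ in the domain of $\sigma_x$, $\sigma_x(U)\leq\sigma_x(V)$ iff $U\subseteq V$. For $p\in P$, $U$ is a type-$p$ neighborhood of $x$ ($p\vdash U(x)$) if $U$ is in the domain of $\sigma_x$ and $\sigma_x(U)=p$. A point $x$ is a $p$-accumulation point of $A$ if every type-$p$ neighborhood of $x$ meets $A$. The direct closure is $p\vdash CL_1(A)=A\cup\{x\in X: x \text{ is a } p\text{-accumulation point of } A\}$; inductively $p\vdash CL_n(A)=p\vdash CL_1(p\vdash CL_{n-1}(A))$ for $n\ge 2$; the transitive $p$-closure is $p\vdash tr(A)=\bigcup_{n\ge1}p\vdash CL_n(A)$. $\sigma$ has least $p$-neighborhood if every $x\in X$ has a type-$p$ neighborhood $p\vdash U_{min}(x)$ contained in every type-$p$ neighborhood of $x$. *)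

From HB Require Import structures.
From mathcomp Require Import all_boot all_order.
From mathcomp Require Import all_classical topology.
Set Implicit Arguments. Unset Strict Implicit. Unset Printing Implicit Defensive.
Import Order.TTheory.
Local Open Scope classical_set_scope.

(* A typed topological space: a topological space T, a poset P of types, and
   for each x an assignment function sigma_x, a partial function from the open
   neighbourhoods of x to P (modelled with option: [sigma x U = Some p] means
   U is in the domain of sigma_x and sigma_x(U) = p). *)
Record typed_assignment (T : topologicalType) (d : Order.disp_t)
    (P : porderType d) := TypedAssignment {
  sigma : T -> set T -> option P;
  sigma_dom : forall x U p, sigma x U = Some p -> open U /\ U x;
  sigma_mono : forall x U V p q, sigma x U = Some p -> sigma x V = Some q ->
    ((p <= q)%O <-> U `<=` V)
}.

Section TypedDefs.
Context (T : topologicalType) (d : Order.disp_t) (P : porderType d)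
  (s : typed_assignment T P).

Definition type_nbhd (p : P) (x : T) (U : set T) : Prop := sigma s x U = Some p.

Definition p_acc_point (p : P) (A : set T) (x : T) : Prop :=
  forall U, type_nbhd p x U -> U `&` A !=set0.

Definition CL1 (p : P) (A : set T) : set T := A `|` [set x | p_acc_point p A x].

(* p |- CL_n(A), n >= 1 (CLn p 0 A = A is only an auxiliary base case) *)
Fixpoint CLn (p : P) (n : nat) (A : set T) : set T :=
  match n with
  | 0 => A
  | n'.+1 => CL1 p (CLn p n' A)
  end.

Definition ptr (p : P) (A : set T) : set T :=
  \bigcup_(n in [set n : nat | (1 <= n)%N]) CLn p n A.

Definition has_least_nbhd (p : P) : Prop :=
  forall x : T, exists Umin, type_nbhd p x Umin /\
    forall V, type_nbhd p x V -> Umin `<=` V.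

End TypedDefs.

From HB Require Import structures.
From mathcomp Require Import all_boot all_order.
From mathcomp Require Import all_classical topology.
Local Open Scope classical_set_scope.

(* A set fixed by the direct closure is fixed by every iterate, hence by the
   transitive closure; so it suffices that [p |- tr(A)] is fixed by
   [p |- CL_1].  If x is a p-accumulation point of [p |- tr(A)], its least
   type-p neighbourhood meets a single [p |- CL_n(A)]; as that neighbourhood
   lies inside every type-p neighbourhood of x, all of them meet this same
   [p |- CL_n(A)], so x lies in [p |- CL_(n+1)(A)]. *)

Section TransitiveClosure.
Variables (T : topologicalType) (d : Order.disp_t) (P : porderType d).
Variables (s : typed_assignment T P) (p : P).

Lemma subset_CL1 (A : set T) : A `<=` CL1 s p A.
Proof. by move=> x Ax; left. Qed.

Lemma CLn_fixpoint (B : set T) (n : nat) : CL1 s p B = B -> CLn s p n B = B.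
Proof. by move=> CL1B; elim: n => [|n IHn] //=; rewrite IHn. Qed.

Lemma ptr_fixpoint (B : set T) : CL1 s p B = B -> ptr s p B = B.
Proof.
move=> CL1B; rewrite /ptr (eq_bigcupr (fun n _ => CLn_fixpoint _ n CL1B)).
by apply: bigcup_const; exists 1%N.
Qed.

Lemma CL1_ptr (A : set T) :
  has_least_nbhd s p -> CL1 s p (ptr s p A) = ptr s p A.
Proof.
move=> least; apply/seteqP; split; last exact: subset_CL1.
move=> x [//|acc_x].
have [Umin [Umin_nbhd Umin_least]] := least x.
have [y [Umin_y [n n_ge1 CLn_y]]] := acc_x Umin Umin_nbhd.
exists n.+1 => //; right => V V_nbhd.
by exists y; split; [exact: Umin_least | exact: CLn_y].
Qed.

End TransitiveClosure.

Theorem proposition2p9 (T : topologicalType) (d : Order.disp_t)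
    (P : porderType d) (s : typed_assignment T P) (p : P) :
  has_least_nbhd s p ->
  forall A : set T, ptr s p (ptr s p A) = ptr s p A.
Proof. by move=> least A; apply: ptr_fixpoint; apply: CL1_ptr. Qed.
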